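(* Let $\mathbf A$ be a regular BBL transformation of bandwidth $(p,q)$ and let $L\le R$ be finite integers with $R-L\ge\tau$. Then $\dim\mathcal M_{L,R}=d\tau$.
   Context: Fix $d\ge1$; $\mathbf M_d$ denotes complex $d\times d$ matrices. $\mathcal V^S_d$ is the vector space of all doubly infinite sequences $\Psi=\{\psi_j\}_{j\in\mathbb Z}$ with $\psi_j\in\mathbb C^d$. A matrix Laurent polynomial of bandwidth $(p,q)$ is $A(w,w^{-1})=\sum_{r=p}^q a_rw^r$ with integers $p\le q$, $a_r\in\mathbf M_d$, $a_p\neq0\neq a_q$. Its banded block-Laurent (BBL) transformation $\mathbf A$ acts on $\mathcal V^S_d$ by $(\mathbf A\Psi)_j=\sum_{r=p}^q a_r\psi_{j+r}$. $\mathbf A$ is regular if $\det\big(w^{-p}A(w,w^{-1})\big)$ is not the zero polynomial. Put $p'=\min(p,0)$, $q'=\max(0,q)$, $\tau=q'-p'$. For $-\infty\le L\le R\le\infty$, $\mathcal V_{L,R}$ is the subspace of sequences with $\psi_j=0$ whenever $j<L$ or $j>R$, and $\mathbf P_{L,R}$ is the projection onto $\mathcal V_{L,R}$ replacing $\psi_j$ by $0$ for $j\notin[L,R]$. The bulk solution space is $\mathcal M_{L,R}=\ker\big(\mathbf P_{L-p',R-q'}\mathbf A|_{\mathcal V_{L,R}}\big)$; for finite $L\le R$ this equals $\ker P_BA_N$, where $A_N=\mathbf P_{L,R}\mathbf A|_{\mathcal V_{L,R}}$ is the $dN\times dN$ block-Toeplitz matrix with blocks $a_{j-i}$, $N=R-L+1$,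 and $P_B=\mathbf P_{L-p',R-q'}|_{\mathcal V_{L,R}}$. *)

From HB Require Import structures.
From mathcomp Require Import all_boot all_order all_algebra.
Set Implicit Arguments. Unset Strict Implicit. Unset Printing Implicit Defensive.
Import Order.TTheory GRing.Theory Num.Theory.
Local Open Scope ring_scope.

(* A BBL transformation of bandwidth (p,q) is given by the coefficient family
   a : int -> 'M_d, of which only a p, ..., a q are used:
   A(w,w^-1) = \sum_{r=p}^q a_r w^r. *)

Definition bbl_apply (C : fieldType) (d : nat) (a : int -> 'M[C]_d) (p q : int)
  (psi : int -> 'cV[C]_d) (j : int) : 'cV[C]_d :=
  \sum_(k < `|q - p|%N.+1) a (p + k%:Z) *m psi (j + p + k%:Z).

(* The polynomial matrix w^{-p} A(w,w^{-1}) = \sum_{k=0}^{q-p} a_{p+k} w^k. *)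
Definition shifted_symbol (C : fieldType) (d : nat) (a : int -> 'M[C]_d) (p q : int)
  : 'M[{poly C}]_d :=
  \matrix_(i, j) \sum_(k < `|q - p|%N.+1) (a (p + k%:Z) i j)%:P * 'X^k.

Definition bbl_regular (C : fieldType) (d : nat) (a : int -> 'M[C]_d) (p q : int) : bool :=
  \det (shifted_symbol a p q) != 0.

Definition pprime (p : int) : int := Num.min p 0.
Definition qprime (q : int) : int := Num.max 0 q.
Definition tau (p q : int) : nat := `|qprime q - pprime p|%N.

Definition nsites (L R : int) : nat := `|R - L|%N.+1.

(* An element of V_{L,R} is represented by the d x N matrix whose c-th column
   is psi_{L+c}; ext_seq turns it into the doubly infinite sequence (zero
   outside [L,R]). *)
Definition ext_seq (C : fieldType) (d N : nat) (L : int) (Psi : 'M[C]_(d, N))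
  (j : int) : 'cV[C]_d :=
  match insub `|j - L|%N with
  | Some c => if L <= j then col c Psi else 0
  | None => 0
  end.

(* The bulk operator P_{L-p',R-q'} A restricted to V_{L,R}, as a map
   V_{L,R} -> V_{L,R} (entries outside the bulk range set to zero). *)
Definition bulk_op (C : fieldType) (d : nat) (a : int -> 'M[C]_d) (p q L R : int)
  (Psi : 'M[C]_(d, nsites L R)) : 'M[C]_(d, nsites L R) :=
  \matrix_(i < d, c < nsites L R)
    (if (L - pprime p <= L + c%:Z) && (L + c%:Z <= R - qprime q)
     then bbl_apply a p q (@ext_seq C d (nsites L R) L Psi) (L + c%:Z) i ord0
     else 0).

Definition bulk_space (C : fieldType) (d : nat) (a : int -> 'M[C]_d) (p q L R : int)
  : {vspace 'M[C]_(d, nsites L R)} :=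
  lker (linfun (@bulk_op C d a p q L R)).

From HB Require Import structures.
From mathcomp Require Import all_boot all_order all_algebra.
From mathcomp Require Import zify.
Set Implicit Arguments. Unset Strict Implicit. Unset Printing Implicit Defensive.
Import Order.TTheory GRing.Theory Num.Theory.
Local Open Scope ring_scope.

(* The bulk equations at the N - tau sites between L - p' and R - q' are the
   block-Toeplitz combinations psi |-> sum_k a_(p+k) psi_(t+s+k), so M_(L,R) is
   the kernel of a linear map from a space of dimension d N onto one of
   dimension d (N - tau). The map is onto: a Y orthogonal to its image yields
   the polynomial row vector Phi(w) = sum_t Y_t w^t with
   Phi(w) w^(-p) A(w, w^(-1)) = 0, and regularity forces Phi = 0. Rank-nullity
   then gives d N - d (N - tau) = d tau. *)

Section MatrixDuality.
Variable C : fieldType.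

Lemma mxvec_dot m n (X Y : 'M[C]_(m, n)) :
  (mxvec X *m (mxvec Y)^T) 0 0 = \sum_i \sum_j X i j * Y i j.
Proof.
rewrite mxE (reindex _ (curry_mxvec_bij _ _)) /= pair_bigA.
by apply: eq_bigr => [[i j]] _; rewrite !mxE !mxvecE.
Qed.

Variables m n m' n' : nat.
Variable f : {linear 'M[C]_(m, n) -> 'M[C]_(m', n')}.

Lemma row_full_lin_mx :
  (forall Y : 'M[C]_(m', n'), (forall X, \sum_i \sum_j f X i j * Y i j = 0) -> Y = 0) ->
  row_full (lin_mx f).
Proof.
move=> perp0; rewrite /row_full -mxrank_tr -[_ == _]/(row_free _) -kermx_eq0.
apply/eqP/row_matrixP => r; rewrite row0.
set y := row r _; have yfT : lin_mx f *m y^T = 0.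
  by rewrite -[lin_mx f]trmxK -trmx_mul -row_mul mulmx_ker row0 trmx0.
rewrite -(vec_mxK y) (perp0 (vec_mx y)) ?linear0 // => X.
have := congr1 (fun z : 'M_1 => z 0 0) (congr1 (mulmx (mxvec X)) yfT).
by rewrite /= mulmxA mul_vec_lin mulmx0 -{1}(vec_mxK y) mxvec_dot mxE.
Qed.

Lemma limg_lin_mx_full : row_full (lin_mx f) -> limg (linfun f) = fullv.
Proof.
move=> full_f; apply/vspaceP => Y; rewrite memvf.
have [x] := submxP (submx_full (mxvec Y) full_f); rewrite mul_rV_lin => xfY.
apply/memv_imgP; exists (vec_mx x); rewrite ?memvf // lfunE.
by apply: (can_inj mxvecK).
Qed.

End MatrixDuality.

Lemma dim_lker_onto (K : fieldType) (U V : vectType K) (f : 'Hom(U, V)) :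
  limg f = fullv -> \dim (lker f) = (\dim {:U} - \dim {:V})%N.
Proof.
by move=> ontof; have := limg_ker_dim f fullv; rewrite capfv ontof => <-; rewrite addnK.
Qed.

Section BlockToeplitz.
Variables (C : fieldType) (d m : nat) (b : nat -> 'M[C]_d) (M s n : nat).

Definition mx_symbol : 'M[{poly C}]_d :=
  \matrix_(i, j) \sum_(k < m.+1) (b k i j)%:P * 'X^k.

Definition poly_row (Y : 'M[C]_(d, M)) : 'rV[{poly C}]_d :=
  \row_i \sum_(t < M) (Y i t)%:P * 'X^t.

Lemma poly_row_eq0 Y : poly_row Y = 0 -> Y = 0.
Proof.
move=> /rowP Y0; apply/matrixP => i t; rewrite mxE.
have := congr1 (coefp t) (Y0 i); rewrite !mxE /= coef0 coef_sum => <-.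
rewrite (bigD1 t) //= coefCM coefXn eqxx mulr1 big1 ?addr0 // => t' /negbTE t't.
by rewrite coefCM coefXn eq_sym -[_ == _]/(t' == t) t't mulr0.
Qed.

Lemma coef_poly_row_symbol Y j k0 :
  ((poly_row Y *m mx_symbol) 0 j)`_k0 =
  \sum_i \sum_(t < M) (\sum_(k < m.+1) b k i j * ((t + k)%N == k0)%:R) * Y i t.
Proof.
rewrite mxE coef_sum; apply: eq_bigr => i _.
rewrite !mxE mulr_suml coef_sum; apply: eq_bigr => t _.
rewrite mulr_sumr coef_sum mulr_suml; apply: eq_bigr => k _.
by rewrite mulrACA -polyCM -exprD coefCM coefXn eq_sym [RHS]mulrC mulrA.
Qed.

(* [inord] clamps out-of-range columns; [toeplitz_fits] below rules this out. *)
Definition block_toeplitz (X : 'M[C]_(d, n.+1)) : 'M[C]_(d, M) :=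
  \matrix_(i, t) (\sum_(k < m.+1) b k *m col (inord (t + k + s)) X) i 0.

Lemma block_toeplitz_is_linear : linear block_toeplitz.
Proof.
move=> c X Y; apply/matrixP => i t; rewrite !mxE !summxE mulr_sumr -big_split.
by apply: eq_bigr => k _; rewrite /= linearP mulmxDr -scalemxAr !mxE.
Qed.

HB.instance Definition _ :=
  GRing.isLinear.Build C _ _ _ block_toeplitz block_toeplitz_is_linear.

Hypothesis toeplitz_fits : (M + m + s <= n.+1)%N.

Lemma block_toeplitz_delta j c i (t : 'I_M) : (c < n.+1)%N ->
  block_toeplitz (delta_mx j (inord c)) i t =
  \sum_(k < m.+1) b k i j * ((t + k + s)%N == c)%:R.
Proof.
move=> ltcn; rewrite mxE summxE; apply: eq_bigr => k _.
rewrite mxE (bigD1 j) //= big1 => [|l lj]; rewrite !mxE ?(negbTE lj) ?mulr0 //.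
rewrite eqxx addr0 -(inj_eq val_inj) /= !inordK //.
by have := ltn_ord t; have := ltn_ord k; lia.
Qed.

Lemma block_toeplitz_onto :
  \det mx_symbol != 0 -> limg (linfun block_toeplitz) = fullv.
Proof.
move=> det_symbol; apply/limg_lin_mx_full/row_full_lin_mx => Y perpY.
apply/poly_row_eq0/eqP; apply: contraNT det_symbol => nzY.
apply/det0P; exists (poly_row Y) => //.
apply/rowP => j; rewrite [RHS]mxE; apply/polyP => k0.
rewrite coef0 coef_poly_row_symbol; have [k0_lt|k0_ge] := ltnP k0 (M + m).
  rewrite -[RHS](perpY (delta_mx j (inord (k0 + s)))).
  apply: eq_bigr => i _; apply: eq_bigr => t _; rewrite block_toeplitz_delta; last by lia.
  by congr (_ * _); apply: eq_bigr => k _; rewrite eqn_add2r.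
apply: big1 => i _; apply: big1 => t _; rewrite big1 ?mul0r // => k _.
suff /negbTE -> : (t + k)%N != k0 by rewrite mulr0.
by have := ltn_ord t; have := ltn_ord k; lia.
Qed.

End BlockToeplitz.

Lemma ext_seq_linearP (C : fieldType) (d N : nat) (L : int) (c : C) (X Y : 'M[C]_(d, N)) j :
  ext_seq L (c *: X + Y) j = c *: ext_seq L X j + ext_seq L Y j.
Proof.
rewrite /ext_seq; case: insub => [k|]; last by rewrite scaler0 addr0.
by case: ifP => _; rewrite ?linearP // scaler0 addr0.
Qed.

Lemma ext_seq_in (C : fieldType) (d n : nat) (L : int) (X : 'M[C]_(d, n.+1)) (c : nat) :
  (c < n.+1)%N -> ext_seq L X (L + c%:Z) = col (inord c) X.
Proof.
move=> ltcn; rewrite /ext_seq (_ : absz (L + c%:Z - L)%R = c); last by lia.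
case: insubP => [k _ kc|]; last by rewrite ltcn.
rewrite ifT; last by lia.
by congr col; apply: val_inj; rewrite /= inordK.
Qed.

Lemma pprimeE p : (pprime p = p /\ p <= 0) \/ (pprime p = 0 /\ 0 <= p).
Proof. by rewrite /pprime /Num.min; case: ltrP => ?; [left|right]; split => //; lia. Qed.

Lemma qprimeE q : (qprime q = q /\ 0 <= q) \/ (qprime q = 0 /\ q <= 0).
Proof. by rewrite /qprime /Num.max; case: ltrP => ?; [left|right]; split => //; lia. Qed.

Section Bulk.
Variables (C : fieldType) (d : nat) (a : int -> 'M[C]_d) (p q L R : int).

Lemma bulk_op_is_linear : linear (@bulk_op C d a p q L R).
Proof.
move=> c X Y; apply/matrixP => i k; rewrite !mxE.
case: ifP => _; last by rewrite mulr0 addr0.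
rewrite /bbl_apply !summxE mulr_sumr -big_split /=; apply: eq_bigr => r _.
by rewrite ext_seq_linearP mulmxDr -scalemxAr !mxE.
Qed.

HB.instance Definition _ :=
  GRing.isLinear.Build C _ _ _ (@bulk_op C d a p q L R) bulk_op_is_linear.

Hypotheses (le_pq : p <= q) (tau_le : (tau p q)%:Z <= R - L).

Lemma tau_le_nsites : (tau p q <= nsites L R)%N.
Proof. by move: tau_le; rewrite /tau /nsites; lia. Qed.

(* The window fits since [`|q - p| + `|p - pprime p| = q - pprime p <= tau p q]. *)
Lemma bulk_toeplitz_fits :
  (nsites L R - tau p q + `|q - p| + `|p - pprime p| <= nsites L R)%N.
Proof.
move: tau_le le_pq; rewrite /tau /nsites.
by have := pprimeE p; have := qprimeE q; lia.
Qed.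

Lemma bulk_rangeE (c : nat) : (c < nsites L R)%N ->
  ((L - pprime p <= L + c%:Z) && (L + c%:Z <= R - qprime q)) =
  (`|pprime p| <= c < `|pprime p| + (nsites L R - tau p q))%N.
Proof.
move: tau_le le_pq; rewrite /tau /nsites => ? ? ?.
have := pprimeE p; have := qprimeE q.
by move=> [[-> ?]|[-> ?]] [[-> ?]|[-> ?]]; apply/idP/idP; lia.
Qed.

Local Notation window := (nsites L R - tau p q)%N.
Local Notation bulk_toeplitz :=
  (@block_toeplitz C d `|q - p| (fun k => a (p + k%:Z)) window `|p - pprime p| `|R - L|).

Lemma bulk_op_window X i (t : 'I_window) :
  @bulk_op C d a p q L R X i (inord (`|pprime p| + t)) = bulk_toeplitz X i t.
Proof.
have := ltn_ord t; have := bulk_toeplitz_fits => fits lt_t.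
have lt_c : (`|pprime p| + t < nsites L R)%N.
  by move: tau_le lt_t; rewrite /tau /nsites; have := pprimeE p; have := qprimeE q; lia.
rewrite !mxE inordK // bulk_rangeE // leq_addr ltn_add2l lt_t.
rewrite /bbl_apply !summxE; apply: eq_bigr => k _.
have -> : L + (`|pprime p| + t)%N%:Z + p + k%:Z = L + (t + k + `|p - pprime p|)%N%:Z.
  by have := pprimeE p; lia.
by rewrite ext_seq_in //; move: fits lt_t (ltn_ord k); rewrite /nsites; lia.
Qed.

Lemma bulk_op_outside X i (c : 'I_(nsites L R)) :
  ~~ (`|pprime p| <= c < `|pprime p| + window)%N -> @bulk_op C d a p q L R X i c = 0.
Proof. by move=> out; rewrite mxE bulk_rangeE // (negbTE out). Qed.

Lemma bulk_spaceE : bulk_space a p q L R = lker (linfun bulk_toeplitz).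
Proof.
apply/vspaceP => X; rewrite !memv_ker !lfunE /=; apply/eqP/eqP => [X0|X0].
  by apply/matrixP => i t; rewrite -bulk_op_window X0 !mxE.
apply/matrixP => i c; rewrite [RHS]mxE.
have [in_window|] := boolP (`|pprime p| <= c < `|pprime p| + window)%N;
  last exact: bulk_op_outside.
have lt_t : (c - `|pprime p| < window)%N by lia.
have -> : c = inord (`|pprime p| + Ordinal lt_t).
  by apply: val_inj; rewrite /= subnKC ?inordK //; case/andP: in_window.
by rewrite bulk_op_window X0 mxE.
Qed.

End Bulk.

Theorem mainTheorem3 (C : numClosedFieldType) (d : nat) (a : int -> 'M[C]_d)
  (p q L R : int) :
  (0 < d)%N -> p <= q -> a p != 0 -> a q != 0 ->
  bbl_regular a p q ->
  L <= R -> (tau p q)%:Z <= R - L ->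
  \dim (bulk_space a p q L R) = (d * tau p q)%N.
Proof.
move=> _ le_pq _ _ regular _ tau_le.
have onto := @block_toeplitz_onto _ _ _ (fun k => a (p + k%:Z)) _ _ _
  (bulk_toeplitz_fits le_pq tau_le) regular.
rewrite bulk_spaceE // (dim_lker_onto onto) !dimvf !dim_matrix -mulnBr.
by rewrite subKn ?tau_le_nsites.
Qed.
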